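(* Let $\Phi$ be a local interaction on $V$, let $\mathcal S=\{X\in\mathcal P_f(V):\Phi_X\neq0\}$, and let $\mathbf c,\mathbf u:\mathcal P_f(V)\to[0,\infty)$ satisfy, for every $Z\in\mathcal S$, $$\sum_{X\in\mathcal S}\chi(Z,X)\,\mathbf u(X)\,e^{\mathbf c(X)}\le\mathbf c(Z).$$ Then for every $Z\in\mathcal S$, $$\sum_{k=1}^\infty\sum_{[X_1,\dots,X_k]\in\mathbb S_k}\chi(Z,X_1,\dots,X_k)\prod_{j=1}^k\mathbf u(X_j)\le e^{\mathbf c(Z)}-1$$ and $$\sum_{k=1}^\infty\sum_{[X_1,\dots,X_k]\in\mathbb P_k}\chi(Z,X_1,\dots,X_k)\prod_{j=1}^k\mathbf u(X_j)\le\mathbf c(Z).$$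
   Context: $\mathcal P_f(V)$ is the set of finite subsets of a set $V$; a local interaction is a family $(\Phi_X)_{X\in\mathcal P_f(V)}$ of self-adjoint operators $\Phi_X$ acting on the sites of $X$. A finite multiset $[Y_1,\dots,Y_m]$ of finite subsets of $V$ is connected if its elements can be ordered so that each $Y_j$ ($j\ge 2$) intersects $Y_1\cup\dots\cup Y_{j-1}$; $\chi(Y_1,\dots,Y_m)=1$ if $[Y_1,\dots,Y_m]$ is connected and $0$ otherwise. $\mathbb S_k$ is the set of all multisets consisting of $k$ elements (with multiplicity) of $\mathcal S$, and $\mathbb P_k\subset\mathbb S_k$ the connected ones; in the sums each multiset is counted once. *)

From HB Require Import structures.
From mathcomp Require Import all_boot all_order all_algebra.
From mathcomp Require Import finmap multiset.
From mathcomp Require Import all_classical all_reals all_analysis.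
Set Implicit Arguments. Unset Strict Implicit. Unset Printing Implicit Defensive.
Import Order.TTheory GRing.Theory Num.Theory.
Local Open Scope ring_scope.

Section Defs.
Variable V : choiceType.

Definition chain_connected (t : seq {fset V}) : bool :=
  [forall j : 'I_(size t),
     (nat_of_ord j == 0)%N ||
     (fsetI (nth fset0 t j) (\big[@fsetU _/fset0]_(Y <- take j t) Y) != fset0)].

(* A finite multiset (given by any listing s of its elements) is connected
   if its elements can be ordered so that the chain condition holds. *)
Definition connected_seq (s : seq {fset V}) : Prop :=
  exists2 t, perm_eq s t & chain_connected t.

Definition chi (R : realType) (s : seq {fset V}) : R :=
  if `[< connected_seq s >] then 1 else 0.

Definition mset_S (S : set {fset V}) (k : nat) : set {mset {fset V}}%mset :=
  [set M | size (enum_mset M) = k /\ (forall X, X \in enum_mset M -> S X)].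

Definition mset_P (S : set {fset V}) (k : nat) : set {mset {fset V}}%mset :=
  [set M | mset_S S k M /\ connected_seq (enum_mset M)].

Definition mweight (R : realType) (u : {fset V} -> R) (M : {mset {fset V}}%mset) : R :=
  \prod_(X <- enum_mset M) u X.

End Defs.

From HB Require Import structures.
From mathcomp Require Import all_boot all_order all_algebra.
From mathcomp Require Import finmap multiset.
From mathcomp Require Import all_classical all_reals all_analysis.
From mathcomp Require Import lra.
Import Order.TTheory GRing.Theory Num.Theory.
Set Implicit Arguments. Unset Strict Implicit. Unset Printing Implicit Defensive.

(* A multiset of polymers is rooted at W if its elements can be listed so that
   each meets W or an earlier one; a multiset M with [Z; M] connected is rooted
   at Z.  Let T be a finite list of polymers with
   sum_{X in T, X meets Y} u(X) e^{c(X)} <= c(Y) for Y in T.  Then the weights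
   prod_j u(X_j) of the distinct multisets over T rooted at W sum to at most
   P_T(W) = prod_{X in T, X meets W} (1 + u(X) e^{c(X)}), and P_T(Y) <= e^{c(Y)}.
   The proof inducts on the size of the multisets and the length of T: pick Y in
   T meeting W; multisets avoiding Y are rooted at W over T - Y, and deleting one
   copy of Y from the others leaves multisets rooted at W u Y, whose weights sum
   to at most P_T(W u Y) <= P_{T-Y}(W) P_T(Y).  With Q = P_{T-Y}(W) this gives
   Q + u(Y) Q e^{c(Y)} = P_T(W).  Taking W = Z gives the first bound, the empty
   multiset accounting for the 1.  For the second, a connected M with [Z; M]
   connected contains some X meeting Z and M - X is rooted at X, so summing over
   such X bounds the sum by sum_{X meets Z} u(X) e^{c(X)} <= c(Z).  The series
   are suprema of finite sums, whose polymers form such a list T. *)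

Section RootedChains.
Variable V : choiceType.
Local Open Scope fset_scope.
Implicit Types (U X Y Z : {fset V}) (t s : seq {fset V}).

Fixpoint rchain U t : bool :=
  if t is X :: t' then ~~ fdisjoint X U && rchain (U `|` X) t' else true.

Lemma rchainP U t :
  reflect (forall j, (j < size t)%N ->
             ~~ fdisjoint (nth fset0 t j) (U `|` \bigcup_(Y <- take j t) Y))
          (rchain U t).
Proof.
elim: t U => [|X t IH] U /=; first by apply: ReflectT.
apply: (iffP andP) => [[XU /IH tU] [|j] /= ltj|h].
- by rewrite big_nil fsetU0.
- by rewrite big_cons fsetUA; apply: tU.
split; first by have := h 0%N isT; rewrite /= big_nil fsetU0.
by apply/IH => j ltj; have := h j.+1 ltj; rewrite /= big_cons fsetUA.
Qed.

Lemma chain_connectedE X t : chain_connected (X :: t) = rchain X t.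
Proof.
apply/forallP/rchainP => [h j ltj|h [[|j] //= ltj]].
  by have := h (Ordinal (ltj : (j.+1 < size (X :: t))%N)); rewrite /= big_cons.
by have := h j ltj; rewrite big_cons.
Qed.

Lemma rchain_cat U t1 t2 :
  rchain U (t1 ++ t2) = rchain U t1 && rchain (U `|` \bigcup_(Y <- t1) Y) t2.
Proof.
elim: t1 U => [|X t1 IH] U /=; first by rewrite big_nil fsetU0.
by rewrite IH big_cons fsetUA andbA.
Qed.

Lemma rchain_rcons U t X :
  rchain U (rcons t X) = rchain U t && ~~ fdisjoint X (U `|` \bigcup_(Y <- t) Y).
Proof. by rewrite -cats1 rchain_cat /= andbT. Qed.

Lemma rchainS U U' t : U `<=` U' -> rchain U t -> rchain U' t.
Proof.
elim: t U U' => [|X t IH] U U' //= sUU' /andP[XU tU].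
rewrite (contra (fdisjointWr sUU')) //=.
by apply: IH tU; apply: fsetSU.
Qed.

Lemma rchain_drop U t1 X t2 : rchain U (t1 ++ X :: t2) ->
  X `<=` U `|` \bigcup_(Y <- t1) Y -> rchain U (t1 ++ t2).
Proof.
rewrite !rchain_cat /= => /andP[-> /andP[_ +]] sX.
by apply: rchainS; rewrite fsubUset fsubset_refl sX.
Qed.

Lemma bigfcup_meet X t : ~~ fdisjoint X (\bigcup_(Y <- t) Y) ->
  exists2 Y, Y \in t & ~~ fdisjoint Y X.
Proof.
move=> Xt; apply/hasP; apply: contraNT Xt => /hasPn dis.
apply/fdisjointP => x xX; apply/bigfcupP => -[Y /andP[Yt _] xY].
by have /negbNE/fdisjointP/(_ x xY) := dis Y Yt; rewrite xX.
Qed.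

Lemma chain_connected_reroot t X : chain_connected t -> X \in t ->
  exists2 t', perm_eq t (X :: t') & rchain X t'.
Proof.
elim/last_ind: t X => [//|[|Y t] Z IH] X.
  by move=> _; rewrite inE => /eqP ->; exists [::].
rewrite mem_rcons inE rcons_cons chain_connectedE rchain_rcons.
rewrite -chain_connectedE => /andP[tY ZY] /orP[/eqP ->|Xt].
  have ZYt : ~~ fdisjoint Z (\bigcup_(W <- Y :: t) W) by rewrite big_cons.
  have [X' X't X'Z] := bigfcup_meet ZYt.
  have [t' tX' X't'] := IH X' tY X't.
  exists (X' :: t'); first by rewrite -rcons_cons perm_rcons perm_cons.
  by rewrite /= X'Z (rchainS _ X't') // fsubsetUr.
have [t' tX' X't'] := IH X tY Xt.
exists (rcons t' Z); first by rewrite -!cats1 -!cat_cons perm_cat2r.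
have := perm_big _ tX' : \bigcup_(W <- Y :: t) W = \bigcup_(W <- X :: t') W.
by rewrite !big_cons rchain_rcons X't' => <-.
Qed.

Definition rconnected U s := has (rchain U) (permutations s).

Lemma rconnectedP U s :
  reflect (exists2 t, perm_eq s t & rchain U t) (rconnected U s).
Proof.
apply: (iffP hasP) => -[t st Ut]; exists t => //;
  by move: st; rewrite mem_permutations perm_sym.
Qed.

Lemma rconnected_perm U s s' : perm_eq s s' -> rconnected U s = rconnected U s'.
Proof.
by move=> ss'; apply: eq_has_r => t; rewrite !mem_permutations (permPr ss').
Qed.

Lemma connected_rconnected s Y s' :
  connected_seq s -> perm_eq s (Y :: s') -> rconnected Y s'.
Proof.
move=> [t st tc] sYs'.
have Yt : Y \in t by rewrite -(perm_mem st) (perm_mem sYs') mem_head.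
have [t' tYt' Yt'] := chain_connected_reroot tc Yt.
apply/rconnectedP; exists t' => //.
by rewrite -(perm_cons Y) -(permPr tYt') -(permPr st) perm_sym.
Qed.

Lemma rconnected_cons U Y s : rconnected U (Y :: s) -> rconnected (U `|` Y) s.
Proof.
move=> /rconnectedP[t Yst Ut].
have Yt : Y \in t by rewrite -(perm_mem Yst) mem_head.
case/splitPr: Yt Yst Ut => t1 t2 Yst Ut.
apply/rconnectedP; exists (t1 ++ t2).
  by rewrite -(perm_cons Y) (permPl Yst) (perm_catCA t1 [:: Y]).
apply: rchain_drop (rchainS (fsubsetUl U Y) Ut) _.
by rewrite -fsetUA fsubsetU // fsubsetUl orbT.
Qed.

Lemma rconnected_meet U s : rconnected U s -> s != [::] ->
  exists2 X, X \in s & ~~ fdisjoint X U.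
Proof.
move=> /rconnectedP[[|X t] st /= Ut]; first by rewrite (perm_nilP st).
by case/andP: Ut => XU _; exists X; rewrite ?(perm_mem st) ?mem_head.
Qed.

Lemma connected_pair Z X : ~~ fdisjoint X Z -> connected_seq [:: Z; X].
Proof. by move=> XZ; exists [:: Z; X]; rewrite ?chain_connectedE //= XZ. Qed.

End RootedChains.

Lemma perm_enum_msetB1 (K : choiceType) (M : {mset K}%mset) Y :
  Y \in M -> perm_eq (enum_mset M) (Y :: enum_mset (M `\ Y)%mset).
Proof.
move=> YM; apply/allP => X _ /=; rewrite !count_mem_mset msetB1E.
rewrite in_mset in YM.
by case: (eqVneq Y X) => [<-|_]; rewrite ?add1n ?subn1 ?prednK ?add0n ?subn0.
Qed.

Lemma uniq_msetB1 (K : choiceType) (s : seq {mset K}%mset) Y :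
  uniq s -> uniq [seq (M `\ Y)%mset | M <- s & Y \in M].
Proof.
move=> us; rewrite map_inj_in_uniq ?filter_uniq // => M1 M2.
by rewrite !mem_filter => /andP[Y1 _] /andP[Y2 _] e; rewrite -(msetB1K Y1) e msetB1K.
Qed.

Section KoteckyPreiss.
Variables (V : choiceType) (R : realType) (u c : {fset V} -> R).
Local Open Scope fset_scope.
Local Open Scope ring_scope.
Hypothesis u_ge0 : forall X, 0 <= u X.
Implicit Types (W X Y Z : {fset V}) (T : seq {fset V}) (M : {mset {fset V}}%mset).
Implicit Types (s : seq {mset {fset V}}%mset).

Definition uexp X := u X * expR (c X).

Definition kp_cond T :=
  forall Y, Y \in T -> \sum_(X <- T | ~~ fdisjoint X Y) uexp X <= c Y.

Definition nbr_prod T W := \prod_(X <- T | ~~ fdisjoint X W) (1 + uexp X).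

Lemma uexp_ge0 X : 0 <= uexp X.
Proof. by rewrite mulr_ge0 ?expR_ge0. Qed.

Lemma nbr_prod_ge1 T W : 1 <= nbr_prod T W.
Proof.
apply: (big_ind (fun x => 1 <= x)) => // [x y|X _]; first exact: mulr_ege1.
by rewrite lerDl uexp_ge0.
Qed.

Lemma nbr_prod_le_expR T W :
  nbr_prod T W <= expR (\sum_(X <- T | ~~ fdisjoint X W) uexp X).
Proof.
by rewrite expR_sum; apply: ler_prod => X _; rewrite addr_ge0 ?uexp_ge0 ?expR_ge1Dx.
Qed.

Lemma nbr_prodU T W W' : nbr_prod T (W `|` W') <= nbr_prod T W * nbr_prod T W'.
Proof.
rewrite /nbr_prod !(big_mkcond (fun X => ~~ fdisjoint X _)) -big_split /=.
apply: ler_prod => X _; rewrite fdisjointXU negb_and.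
have : 1 <= 1 + uexp X by rewrite lerDl uexp_ge0.
by case: (fdisjoint X W); case: (fdisjoint X W') => /=; rewrite ?mulr1 ?mul1r //; nra.
Qed.

Lemma nbr_prod_rem T W Y : Y \in T -> ~~ fdisjoint Y W ->
  nbr_prod T W = (1 + uexp Y) * nbr_prod (rem Y T) W.
Proof. by move=> YT YW; rewrite /nbr_prod (perm_big _ (perm_to_rem YT)) big_cons YW. Qed.

Lemma kp_cond_rem T Y : kp_cond T -> kp_cond (rem Y T).
Proof.
move=> kpT Z /mem_rem ZT; apply: le_trans (kpT Z ZT).
have [YT|/rem_id -> //] := boolP (Y \in T).
rewrite [leRHS](perm_big _ (perm_to_rem YT)) big_cons.
by case: ifP => _; rewrite ?lerDr ?uexp_ge0.
Qed.

Lemma nbr_prod_rem_le T W Y : kp_cond T -> Y \in T -> ~~ fdisjoint Y W ->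
  nbr_prod (rem Y T) W + u Y * nbr_prod T (W `|` Y) <= nbr_prod T W.
Proof.
move=> kpT YT YW.
have YY : ~~ fdisjoint Y Y.
  apply: contraNN YW => /fdisjointP YY; apply/fdisjointP => x xY.
  by have := YY x xY; rewrite xY.
have YWY : ~~ fdisjoint Y (W `|` Y) by rewrite fdisjointXU negb_and YY orbT.
set Q := nbr_prod (rem Y T) W.
have PY : (1 + uexp Y) * nbr_prod (rem Y T) Y <= expR (c Y).
  rewrite -(nbr_prod_rem YT YY); apply: le_trans (nbr_prod_le_expR _ _) _.
  by rewrite ler_expR kpT.
have PWY : nbr_prod T (W `|` Y) <= Q * expR (c Y).
  rewrite (nbr_prod_rem YT YWY).
  apply: le_trans (_ : _ <= (1 + uexp Y) * (Q * nbr_prod (rem Y T) Y)) _.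
    by rewrite ler_wpM2l ?addr_ge0 ?uexp_ge0 ?nbr_prodU.
  by rewrite mulrCA ler_wpM2l // (le_trans ler01 (nbr_prod_ge1 _ _)).
rewrite (nbr_prod_rem YT YW) mulrDl mul1r lerD2l /uexp -mulrA [_ * Q]mulrC.
by rewrite ler_wpM2l.
Qed.

Definition rweight W M := if rconnected W (enum_mset M) then mweight u M else 0.

Lemma mweight_ge0 M : 0 <= mweight u M.
Proof. exact: prodr_ge0. Qed.

Lemma rweight_ge0 W M : 0 <= rweight W M.
Proof. by rewrite /rweight; case: ifP => // _; apply: mweight_ge0. Qed.

Lemma mweight_msetB1 M Y : Y \in M -> mweight u M = u Y * mweight u (M `\ Y)%mset.
Proof. by move=> YM; rewrite /mweight (perm_big _ (perm_enum_msetB1 YM)) big_cons. Qed.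

Lemma rweight_msetB1 W M Y :
  Y \in M -> rweight W M <= u Y * rweight (W `|` Y) (M `\ Y)%mset.
Proof.
move=> YM; rewrite {1}/rweight (rconnected_perm _ (perm_enum_msetB1 YM)).
case: ifP => [/rconnected_cons WYM|_]; last by rewrite mulr_ge0 ?rweight_ge0.
by rewrite /rweight WYM (mweight_msetB1 YM).
Qed.

Lemma rweight_mset0 W : rweight W mset0%mset = 1.
Proof. by rewrite /rweight /mweight enum_mset0 big_nil. Qed.

Lemma sum_rweight_le1 W s : uniq s ->
    (forall M, M \in s -> M != mset0%mset -> rweight W M = 0) ->
  \sum_(M <- s) rweight W M <= 1.
Proof.
move=> us h; have [s0|s0] := boolP (mset0%mset \in s); last first.
  rewrite big1_seq ?ler01 // => M /= Ms; apply: h => //.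
  by apply: contraNneq s0 => <-.
rewrite (bigD1_seq _ s0 us) /= big1_seq ?addr0; last by move=> M /andP[M0 Ms]; apply: h.
by rewrite rweight_mset0.
Qed.

Lemma sum_rweight_le_size n T W s : kp_cond T -> uniq s ->
    (forall M, M \in s -> (size M <= n)%N /\ {subset M <= T}) ->
  \sum_(M <- s) rweight W M <= nbr_prod T W.
Proof.
elim: n T W s => [|n IHn] T W s kpT us hs.
  apply: le_trans (nbr_prod_ge1 T W); apply: sum_rweight_le1 => // M /hs[].
  by rewrite leqn0 size_mset_eq0 => /eqP ->; rewrite eqxx.
have [k] := ubnP (size T); elim: k T W s kpT us hs => // k IHk T W s kpT us hs.
move=> /ltnSE szT.
have [/hasP[Y YT YW]|/hasPn noY] := boolP (has (fun Y => ~~ fdisjoint Y W) T).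
  rewrite (bigID (fun M => Y \in M)) /= addrC.
  apply: le_trans (nbr_prod_rem_le kpT YT YW); apply: lerD.
    rewrite -big_filter; apply: IHk; rewrite ?filter_uniq //.
    - exact: kp_cond_rem.
    - move=> M; rewrite mem_filter => /andP[YM /hs[szM MT]]; split => // X XM.
      by rewrite rem_mem ?MT //; apply: contraNneq YM => <-.
    - by apply: leq_trans szT; rewrite size_rem // ltn_predL; case: (T) YT.
  apply: le_trans (ler_sum _ (fun M => @rweight_msetB1 W M Y)) _.
  rewrite -mulr_sumr ler_wpM2l //.
  have := IHn T (W `|` Y) _ kpT (uniq_msetB1 Y us); rewrite big_map big_filter.
  apply=> _ /mapP[M + ->]; rewrite mem_filter => /andP[YM /hs[szM MT]].
  split; first by move: szM; rewrite (perm_size (perm_enum_msetB1 YM)).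
  by move=> X /msetB1P[_ /MT].
apply: le_trans (nbr_prod_ge1 T W); apply: sum_rweight_le1 => // M /hs[_ MT] M0.
rewrite /rweight; case: ifP => // /rconnected_meet[|X XM XW].
  by rewrite -size_eq0 size_mset_eq0.
by have := noY X (MT X XM); rewrite XW.
Qed.

Lemma sum_rweight_le T W s : kp_cond T -> uniq s ->
    (forall M, M \in s -> {subset M <= T}) ->
  \sum_(M <- s) rweight W M <= nbr_prod T W.
Proof.
move=> kpT us sT.
apply: (sum_rweight_le_size (n := (\max_(M <- s) size (enum_mset M))%N)) => // M Ms.
by split; [apply: leq_bigmax_seq | apply: sT].
Qed.

Lemma chi_mweight_le_rweight Z M :
  chi R (Z :: enum_mset M) * mweight u M <= rweight Z M.
Proof.
rewrite /chi; case: asboolP => [ZM|_]; last by rewrite mul0r rweight_ge0.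
by rewrite mul1r /rweight (connected_rconnected ZM (perm_refl _)).
Qed.

Lemma sum_chi_mweight_le T Z s : kp_cond T ->
    \sum_(X <- T | ~~ fdisjoint X Z) uexp X <= c Z ->
    uniq s -> mset0%mset \notin s -> (forall M, M \in s -> {subset M <= T}) ->
  \sum_(M <- s) chi R (Z :: enum_mset M) * mweight u M <= expR (c Z) - 1.
Proof.
move=> kpT hZ us s0 sT.
have rweight_le : 1 + \sum_(M <- s) rweight Z M <= nbr_prod T Z.
  have := @sum_rweight_le T Z (mset0%mset :: s) kpT.
  rewrite big_cons rweight_mset0 /= s0 us; apply=> // M.
  by rewrite inE => /orP[/eqP -> X|/sT //]; rewrite in_mset0.
have nbr_le : nbr_prod T Z <= expR (c Z).
  by apply: le_trans (nbr_prod_le_expR T Z) _; rewrite ler_expR.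
have chi_le := ler_sum s (fun M (_ : true) => chi_mweight_le_rweight Z M).
lra.
Qed.

Lemma chi_mweight_le_sum_rweight T Z M :
    M != mset0%mset -> connected_seq (enum_mset M) -> {subset M <= T} ->
  chi R (Z :: enum_mset M) * mweight u M <=
    \sum_(Y <- T | ~~ fdisjoint Y Z)
       (if Y \in M then u Y * rweight Y (M `\ Y)%mset else 0).
Proof.
move=> M0 Mconn MT.
have terms_ge0 Y : 0 <= (if Y \in M then u Y * rweight Y (M `\ Y)%mset else 0).
  by case: ifP; rewrite ?mulr_ge0 ?rweight_ge0.
rewrite /chi; case: asboolP => [ZM|_]; last by rewrite mul0r sumr_ge0.
have [|X XM XZ] := rconnected_meet (connected_rconnected ZM (perm_refl _)).
  by rewrite -size_eq0 size_mset_eq0.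
rewrite mul1r (perm_big _ (perm_to_rem (MT X XM))) big_cons XZ XM.
have XMX := connected_rconnected Mconn (perm_enum_msetB1 XM).
by rewrite /rweight XMX -(mweight_msetB1 XM) lerDl sumr_ge0.
Qed.

Lemma sum_chi_mweight_connected_le T Z s : kp_cond T ->
    \sum_(X <- T | ~~ fdisjoint X Z) uexp X <= c Z -> uniq s ->
    (forall M, M \in s ->
       [/\ M != mset0%mset, connected_seq (enum_mset M) & {subset M <= T}]) ->
  \sum_(M <- s) chi R (Z :: enum_mset M) * mweight u M <= c Z.
Proof.
move=> kpT hZ us hs; apply: le_trans hZ.
have chi_le : \sum_(M <- s) chi R (Z :: enum_mset M) * mweight u M <=
    \sum_(M <- s) \sum_(Y <- T | ~~ fdisjoint Y Z)
       (if Y \in M then u Y * rweight Y (M `\ Y)%mset else 0).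
  rewrite big_seq [leRHS]big_seq; apply: ler_sum => M /hs[].
  exact: chi_mweight_le_sum_rweight.
apply: le_trans chi_le _; rewrite exchange_big big_seq_cond [leRHS]big_seq_cond.
apply: ler_sum => Y /andP[YT _]; rewrite -big_mkcond -mulr_sumr /uexp ler_wpM2l //.
have := sum_rweight_le Y kpT (uniq_msetB1 Y us); rewrite big_map big_filter.
move=> /(_ _)/le_trans; apply.
  move=> _ /mapP[M + ->]; rewrite mem_filter => /andP[YM /hs[_ _ MT]].
  by move=> X /msetB1P[_ /MT].
by apply: le_trans (nbr_prod_le_expR T Y) _; rewrite ler_expR kpT.
Qed.

End KoteckyPreiss.

Local Open Scope classical_set_scope.
Local Open Scope ring_scope.

Lemma sum_le_esum (R : realType) (T : choiceType) (S : set T) (r : seq T) (f : T -> R) :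
  uniq r -> (forall x, x \in r -> S x) ->
  ((\sum_(x <- r) f x)%:E <= \esum_(x in S) (f x)%:E)%E.
Proof.
move=> ur rS; apply: esum_ge; exists [set` r].
  by split=> [|x /rS]; first exact: finite_seq.
by rewrite -fsbig_seq // sumEFin.
Qed.

Lemma nneseries_esum_le (R : realType) (T : choiceType) (J : nat -> set T)
    (f : T -> R) (B : R) :
  (forall x, 0 <= f x) -> trivIset setT J ->
  (forall F : {fset T}, (forall x, x \in F -> exists2 k, (1 <= k)%N & J k x) ->
     \sum_(x <- F) f x <= B) ->
  (\sum_(1 <= k <oo) \esum_(x in J k) (f x)%:E <= B%:E)%E.
Proof.
move=> f_ge0 tJ hF; have fE_ge0 x : (0 <= (f x)%:E)%E by rewrite lee_fin.
rewrite eseries_cond nneseries_esum; last by move=> k _; apply: esum_ge0.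
rewrite -(esum_bigcupT J) //; apply: ge_ereal_sup => _ [A [finA sA] <-].
rewrite fsbig_finite //= sumEFin lee_fin; apply: hF => x.
by rewrite in_fset_set // inE => /sA[k /= k1 Jkx]; exists k.
Qed.

Lemma trivIset_size (K : choiceType) (J : nat -> set {mset K}%mset) :
  (forall k M, J k M -> size M = k) -> trivIset setT J.
Proof. by move=> h i j _ _ [M [Mi Mj]]; rewrite -(h _ _ Mi) -(h _ _ Mj). Qed.

Lemma sum_uexp_le_esum (R : realType) (V : choiceType) (S : set {fset V})
    (u c : {fset V} -> R) (T : seq {fset V}) Y :
  (forall X, 0 <= u X) -> uniq T -> (forall X, X \in T -> S X) ->
  (\esum_(X in S) (chi R [:: Y; X] * u X * expR (c X))%:E <= (c Y)%:E)%E ->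
  \sum_(X <- T | ~~ fdisjoint X Y) uexp u c X <= c Y.
Proof.
move=> u_ge0 uT TS hY; rewrite -lee_fin; apply: le_trans hY.
apply: le_trans (sum_le_esum _ uT TS); rewrite lee_fin big_mkcond /=.
apply: ler_sum => X _; rewrite /chi; case: asboolP => [_|YX].
  by rewrite mul1r; case: ifP => _; rewrite ?mulr_ge0 ?expR_ge0.
case: ifP => XY; last by rewrite !mul0r.
by case: YX; apply: connected_pair.
Qed.

Lemma exists_kp_cover (R : realType) (V : choiceType) (S : set {fset V})
    (u c : {fset V} -> R) (F : seq {mset {fset V}}%mset) Z :
  (forall X, 0 <= u X) ->
  (forall Y, S Y ->
     (\esum_(X in S) (chi R [:: Y; X] * u X * expR (c X))%:E <= (c Y)%:E)%E) ->
  S Z -> (forall M : {mset _}%mset, M \in F -> forall X, X \in M -> S X) ->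
  exists T, [/\ kp_cond u c T, \sum_(X <- T | ~~ fdisjoint X Z) uexp u c X <= c Z
              & forall M : {mset _}%mset, M \in F -> {subset M <= T}].
Proof.
move=> u_ge0 hS SZ FS; pose T := undup (flatten [seq enum_mset M | M <- F]).
have TS X : X \in T -> S X by rewrite mem_undup => /flatten_mapP[M /FS]; apply.
have uT : uniq T := undup_uniq _.
exists T; split=> [Y /TS SY||M MF X XM].
- exact: sum_uexp_le_esum u_ge0 uT TS (hS Y SY).
- exact: sum_uexp_le_esum u_ge0 uT TS (hS Z SZ).
- by rewrite mem_undup; apply/flatten_mapP; exists M.
Qed.

Unset Implicit Arguments. Set Strict Implicit.

Theorem lemma3p12 (R : realType) (V : choiceType) (A : zmodType)
  (Phi : {fset V} -> A) (c u : {fset V} -> R) :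
  let S := [set X : {fset V} | Phi X != 0] in
  (forall X, 0 <= c X) -> (forall X, 0 <= u X) ->
  (forall Z, S Z ->
     (\esum_(X in S) (chi R [:: Z; X] * u X * expR (c X))%:E <= (c Z)%:E)%E) ->
  forall Z, S Z ->
    (\sum_(1 <= k <oo)
        \esum_(M in mset_S S k) (chi R (Z :: enum_mset M) * mweight u M)%:E
       <= (expR (c Z) - 1)%:E)%E /\
    (\sum_(1 <= k <oo)
        \esum_(M in mset_P S k) (chi R (Z :: enum_mset M) * mweight u M)%:E
       <= (c Z)%:E)%E.
Proof.
move=> S _ u_ge0 hS Z SZ.
have f_ge0 M : 0 <= chi R (Z :: enum_mset M) * mweight u M.
  by rewrite mulr_ge0 ?(mweight_ge0 u_ge0) // /chi; case: asboolP.
split; apply: nneseries_esum_le => //.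
- by apply: trivIset_size => k M [].
- move=> F FS; have [|T [kpT hZ FT]] := exists_kp_cover (F := F) u_ge0 hS SZ.
    by move=> M /FS[k _ [_ MS]].
  apply: (sum_chi_mweight_le u_ge0 kpT hZ (fset_uniq F)) FT.
  by apply/negP => /FS[k k1 [szk _]]; move: k1; rewrite -szk enum_mset0.
- by apply: trivIset_size => k M [[]].
move=> F FS; have [|T [kpT hZ FT]] := exists_kp_cover (F := F) u_ge0 hS SZ.
  by move=> M /FS[k _ [[_ MS] _]].
apply: (sum_chi_mweight_connected_le u_ge0 kpT hZ (fset_uniq F)) => M MF.
have [k k1 [[szM _] Mc]] := FS M MF; split=> //; last exact: FT.
by rewrite -size_mset_eq0 szM -lt0n.
Qed.
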